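(* Let $\Sigma$ be a $p\times p$ positive definite correlation matrix ($\Sigma_{jj}=1$), let $\beta\in\mathbb{R}^p$, $\sigma>0$, $\nu\ge0$, $n\ge1$, $\mu_n=\sqrt{2\log p/n}$, and let $S=\{j:|\beta_j|>\sigma\nu\mu_n\}$, $k=|S|$, $S^c=\{1,\dots,p\}\setminus S$. Let $\bar k\ge1$ be an integer with $k\le\bar k$. Suppose $\gamma(\Sigma):=\max_{j\neq j'}|\Sigma_{jj'}|\le\omega_0/(2\bar k)$ for some $0\le\omega_0<1$, and $\|\beta_{S^c}\|_1\le\sigma\eta\mu_n$ for some $\eta\ge0$; put $\bar\eta=\eta/\bar k$. Then, if $1\le k\le\bar k$: (a) for every $T\subseteq\{1,\dots,p\}$ with $|T|=k$, $\lambda_{min}(\Sigma_{TT})\ge1-\omega_0/2$ and $\lambda_{max}(\Sigma_{TT})\le1+\omega_0/2$; (b) for every $T$ with $|T|=k$, $\max_{j\notin T}\|\Sigma_{TT}^{-1}\Sigma_{Tj}\|_1\le\omega_0$; (c) $\|\Sigma_{SS}^{-1}\Sigma_{SS^c}\beta_{S^c}\|_\infty\le\sigma\,\omega_0\bar\eta\,\mu_n$ and $\|\Sigma_{S^c|S}\beta_{S^c}\|_\infty\le\sigma(\nu+\omega_0\bar\eta)\mu_n$, where $\Sigma_{S^c|S}=\Sigma_{S^cS^c}-\Sigma_{S^cS}\Sigma_{SS}^{-1}\Sigma_{SS^c}$. If $k=0$, then $\|\Sigma\beta\|_\infty\le\sigma(\nu+\omega_0\bar\eta)\mu_n$.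
   Context: For index sets $A,A'$, $\Sigma_{AA'}$ is the submatrix with rows in $A$ and columns in $A'$, $\beta_A$ is the subvector indexed by $A$; $\lambda_{min}(\cdot),\lambda_{max}(\cdot)$ denote the smallest and largest eigenvalues of a symmetric matrix. *)

From HB Require Import structures.
From mathcomp Require Import all_boot all_order all_algebra.
From mathcomp Require Import reals exp.
Set Implicit Arguments. Unset Strict Implicit. Unset Printing Implicit Defensive.
Import Order.TTheory GRing.Theory Num.Theory.
Local Open Scope ring_scope.

Section Defs.
Variable R : realType.
Variable p : nat.

(* Sigma_{T U}: rows in T, columns in U (indices enumerated increasingly). *)
Definition subm (A : 'M[R]_p) (T U : {set 'I_p}) : 'M[R]_(#|T|, #|U|) :=
  \matrix_(i < #|T|, j < #|U|) A (enum_val i) (enum_val j).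

Definition subcol (A : 'M[R]_p) (T : {set 'I_p}) (j : 'I_p) : 'cV[R]_#|T| :=
  \col_(i < #|T|) A (enum_val i) j.

Definition subv (b : 'cV[R]_p) (T : {set 'I_p}) : 'cV[R]_#|T| :=
  \col_(i < #|T|) b (enum_val i) 0.

Definition posdef (A : 'M[R]_p) : Prop :=
  A^T = A /\ forall x : 'cV[R]_p, x != 0 -> 0 < (x^T *m A *m x) 0 0.

Definition gamma (A : 'M[R]_p) : R :=
  \big[Num.max/0]_(j : 'I_p) \big[Num.max/0]_(j' : 'I_p | j != j') `|A j j'|.
End Defs.

Definition norm1 (R : realType) (m : nat) (v : 'cV[R]_m) : R :=
  \sum_(i < m) `|v i 0|.

Definition norminf (R : realType) (m : nat) (v : 'cV[R]_m) : R :=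
  \big[Num.max/0]_(i < m) `|v i 0|.

Definition lambda_min_ge (R : realType) (m : nat) (A : 'M[R]_m) (c : R) : Prop :=
  forall a, eigenvalue A a -> c <= a.

Definition lambda_max_le (R : realType) (m : nat) (A : 'M[R]_m) (c : R) : Prop :=
  forall a, eigenvalue A a -> a <= c.

Definition mu_n (R : realType) (p n : nat) : R :=
  Num.sqrt (2 * ln (p%:R : R) / n%:R).

From HB Require Import structures.
From mathcomp Require Import all_boot all_order all_algebra.
From mathcomp Require Import reals exp.
From mathcomp Require Import ring lra.
Import Order.TTheory GRing.Theory Num.Theory.
Local Open Scope ring_scope.
Set Implicit Arguments. Unset Strict Implicit.

(* Write Sigma_TT = I + E with |E_ij| <= gamma(Sigma). When |T| gamma <= omega0/2 < 1/2,
   E has operator norm at most |T| gamma both on l_inf and on l_1, so Sigma_TT is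
   invertible with inverse of norm at most 2 in both norms, and (Gershgorin) its
   eigenvalues lie within |T| gamma of 1. Every off-diagonal block has entries bounded
   by gamma, so the remaining estimates follow from |(B x)_i| <= gamma ||x||_1. *)

Section VectorNorms.
Variable R : realType.

Lemma norminf_ge0 m (x : 'cV[R]_m) : 0 <= norminf x.
Proof. by rewrite /norminf; elim/big_ind: _ => // a b; rewrite le_max => ->. Qed.

Lemma ler_entry_norminf m (x : 'cV[R]_m) i : `|x i 0| <= norminf x.
Proof. exact: le_bigmax. Qed.

Lemma norminf_le m (x : 'cV[R]_m) M :
  0 <= M -> (forall i, `|x i 0| <= M) -> norminf x <= M.
Proof. by move=> M0 xM; apply/bigmax_leP. Qed.

Lemma norminf_eq0 m (x : 'cV[R]_m) : (norminf x == 0) = (x == 0).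
Proof.
apply/eqP/eqP => [x0|->]; last first.
  by apply/eqP; rewrite eq_le norminf_ge0 andbT norminf_le // => i; rewrite mxE normr0.
apply/matrixP => i j; rewrite (ord1 j) mxE; apply/eqP; rewrite -normr_le0 -x0.
exact: ler_entry_norminf.
Qed.

Lemma norminfZ m (c : R) (x : 'cV[R]_m) : norminf (c *: x) = `|c| * norminf x.
Proof.
rewrite /norminf (big_endo _ (fun y z => maxr_pMr y z (normr_ge0 c))) ?mulr0 //.
by apply: eq_bigr => i _; rewrite mxE normrM.
Qed.

Lemma norminfB m (u v : 'cV[R]_m) : norminf (u - v) <= norminf u + norminf v.
Proof.
apply: norminf_le => [|i]; first by rewrite addr_ge0 ?norminf_ge0.
by rewrite !mxE (le_trans (ler_normB _ _)) // lerD ?ler_entry_norminf.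
Qed.

Lemma norm1_ge0 m (x : 'cV[R]_m) : 0 <= norm1 x.
Proof. exact: sumr_ge0. Qed.

Lemma norm1B m (u v : 'cV[R]_m) : norm1 (u - v) <= norm1 u + norm1 v.
Proof.
by rewrite /norm1 -big_split /=; apply: ler_sum => i _; rewrite !mxE ler_normB.
Qed.

Lemma norm1_le_norminf m (x : 'cV[R]_m) : norm1 x <= m%:R * norminf x.
Proof.
rewrite mulr_natl -[X in _ *+ X]card_ord -sumr_const.
by apply: ler_sum => i _; apply: ler_entry_norminf.
Qed.

Lemma norm1_subv p (b : 'cV[R]_p) (T : {set 'I_p}) :
  norm1 (subv b T) = \sum_(j in T) `|b j 0|.
Proof.
by rewrite /norm1 (big_enum_val (fun j => `|b j 0|)); apply: eq_bigr => i; rewrite mxE.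
Qed.

End VectorNorms.

Section EntrywiseBounds.
Variables (R : realType) (m n : nat) (B : 'M[R]_(m, n)) (g : R).
Hypothesis leB : forall i j, `|B i j| <= g.

Lemma normr_mulmx_entry_le (x : 'cV[R]_n) i : `|(B *m x) i 0| <= g * norm1 x.
Proof.
rewrite mxE (le_trans (ler_norm_sum _ _ _)) // /norm1 mulr_sumr.
by apply: ler_sum => j _; rewrite normrM ler_wpM2r.
Qed.

Lemma norminf_mulmx_le (x : 'cV[R]_n) :
  0 <= g -> norminf (B *m x) <= n%:R * g * norminf x.
Proof.
move=> g0; apply: norminf_le => [|i]; first by rewrite !mulr_ge0 ?norminf_ge0.
apply: le_trans (normr_mulmx_entry_le x i) _.
by rewrite [n%:R * g]mulrC -mulrA ler_wpM2l ?norm1_le_norminf.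
Qed.

Lemma norm1_mulmx_le (x : 'cV[R]_n) : norm1 (B *m x) <= m%:R * g * norm1 x.
Proof.
rewrite -mulrA mulr_natl -[X in _ *+ X]card_ord -sumr_const.
by apply: ler_sum => i _; apply: normr_mulmx_entry_le.
Qed.

End EntrywiseBounds.

Section NearIdentity.
Variables (R : realType) (m : nat) (A : 'M[R]_m) (g : R).
Hypotheses (g0 : 0 <= g) (leA1 : forall i j, `|(A - 1%:M) i j| <= g).

Let split_near1 (x : 'cV[R]_m) : x = A *m x - (A - 1%:M) *m x.
Proof. by rewrite mulmxBl mul1mx opprB addrC subrK. Qed.

Lemma norminf_mulmx_ge (x : 'cV[R]_m) :
  (1 - m%:R * g) * norminf x <= norminf (A *m x).
Proof.
have := norminfB (A *m x) ((A - 1%:M) *m x); rewrite -split_near1.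
have := norminf_mulmx_le leA1 x g0; lra.
Qed.

Lemma norm1_mulmx_ge (x : 'cV[R]_m) : (1 - m%:R * g) * norm1 x <= norm1 (A *m x).
Proof.
have := norm1B (A *m x) ((A - 1%:M) *m x); rewrite -split_near1.
have := norm1_mulmx_le leA1 x; lra.
Qed.

Lemma unitmx_near1 : m%:R * g < 1 -> A \in unitmx.
Proof.
move=> mg1; rewrite -unitmx_tr -row_free_unit -kermx_eq0.
apply/eqP/row_matrixP => i; rewrite row0.
set v := row i (kermx A^T).
have Av0 : A *m v^T = 0 by rewrite -[A]trmxK -trmx_mul -row_mul mulmx_ker row0 trmx0.
have := norminf_mulmx_ge v^T; rewrite Av0.
have /eqP -> : norminf (0 : 'cV[R]_m) == 0 by rewrite norminf_eq0.
rewrite pmulr_rle0 ?subr_gt0 // => /(conj (norminf_ge0 v^T))/andP.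
by rewrite -eq_le eq_sym norminf_eq0 -trmx0 (inj_eq trmx_inj) => /eqP.
Qed.

Lemma eigenvalue_near1 a : eigenvalue A a -> `|a - 1| <= m%:R * g.
Proof.
case/eigenvalueP => v vA v0.
have leAT1 i j : `|(A^T - 1%:M) i j| <= g.
  by have := leA1 j i; rewrite !mxE eq_sym.
have : (A^T - 1%:M) *m v^T = (a - 1) *: v^T.
  by rewrite mulmxBl mul1mx -trmx_mul vA linearZ scalerBl scale1r.
move/(congr1 (@norminf R m)); rewrite norminfZ => eq_norm.
have := norminf_mulmx_le leAT1 v^T g0; rewrite eq_norm ler_pM2r //.
by rewrite lt_def norminf_eq0 -trmx0 (inj_eq trmx_inj) v0 norminf_ge0.
Qed.

Lemma norminf_invmx_mulmx_le (y : 'cV[R]_m) :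
  m%:R * g <= 2^-1 -> norminf (invmx A *m y) <= 2 * norminf y.
Proof.
move=> mg; have Au : A \in unitmx by apply: unitmx_near1; lra.
have := norminf_mulmx_ge (invmx A *m y); rewrite mulmxA mulmxV // mul1mx.
have := norminf_ge0 (invmx A *m y); nra.
Qed.

Lemma norm1_invmx_mulmx_le (y : 'cV[R]_m) :
  m%:R * g <= 2^-1 -> norm1 (invmx A *m y) <= 2 * norm1 y.
Proof.
move=> mg; have Au : A \in unitmx by apply: unitmx_near1; lra.
have := norm1_mulmx_ge (invmx A *m y); rewrite mulmxA mulmxV // mul1mx.
have := norm1_ge0 (invmx A *m y); nra.
Qed.

Lemma normr_mulmx_near1_entry_le (x : 'cV[R]_m) i :
  `|(A *m x) i 0| <= `|x i 0| + g * norm1 x.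
Proof.
have -> : A *m x = x + (A - 1%:M) *m x by rewrite mulmxBl mul1mx addrC subrK.
by rewrite [(x + _) i 0]mxE (le_trans (ler_normD _ _)) // lerD2l normr_mulmx_entry_le.
Qed.

Lemma norminf_mulmx_near1_le (x : 'cV[R]_m) t :
  0 <= t -> (forall i, `|x i 0| <= t) -> norminf (A *m x) <= t + g * norm1 x.
Proof.
move=> t0 xt; apply: norminf_le => [|i]; first by rewrite addr_ge0 ?mulr_ge0 ?norm1_ge0.
by rewrite (le_trans (normr_mulmx_near1_entry_le x i)) ?lerD2r.
Qed.

End NearIdentity.

Section CorrelationMatrix.
Variables (R : realType) (p : nat).

Definition schur_compl (A : 'M[R]_p) (S : {set 'I_p}) :=
  subm A (~: S) (~: S) - subm A (~: S) S *m invmx (subm A S S) *m subm A S (~: S).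

Lemma gamma_ge0 (A : 'M[R]_p) : 0 <= gamma A.
Proof.
rewrite /gamma; elim/big_ind: _ => // [a b|j _]; first by rewrite le_max => ->.
by elim/big_ind: _ => // a b; rewrite le_max => ->.
Qed.

Lemma ler_offdiag_gamma (A : 'M[R]_p) j j' : j != j' -> `|A j j'| <= gamma A.
Proof.
move=> jj'; apply: le_trans (le_bigmax _ _ j).
exact: (le_bigmax_cond _ (P := fun j' => j != j') (fun j' => `|A j j'|) jj').
Qed.

Lemma subm_disjoint_le (A : 'M[R]_p) (T U : {set 'I_p}) :
  [disjoint T & U] -> forall i j, `|subm A T U i j| <= gamma A.
Proof.
move=> TU i j; rewrite mxE ler_offdiag_gamma //.
by apply: contraTneq (enum_valP j) => <-; rewrite (disjointFr TU) ?enum_valP.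
Qed.

Lemma norm1_subcol_le (A : 'M[R]_p) (T : {set 'I_p}) j :
  j \notin T -> norm1 (subcol A T j) <= #|T|%:R * gamma A.
Proof.
move=> jT; rewrite mulr_natl -[X in _ *+ X]card_ord -sumr_const.
apply: ler_sum => i _; rewrite mxE ler_offdiag_gamma //.
by apply: contraNneq jT => <-; apply: enum_valP.
Qed.

Variable Sigma : 'M[R]_p.
Hypothesis diag1 : forall j, Sigma j j = 1.

Lemma near1_gamma i j : `|(Sigma - 1%:M) i j| <= gamma Sigma.
Proof.
rewrite !mxE; case: eqVneq => [->|ij]; first by rewrite diag1 subrr normr0 gamma_ge0.
by rewrite subr0 ler_offdiag_gamma.
Qed.

Lemma subm_near1_gamma (T : {set 'I_p}) i j :
  `|(subm Sigma T T - 1%:M) i j| <= gamma Sigma.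
Proof.
by have := near1_gamma (enum_val i) (enum_val j); rewrite !mxE (inj_eq enum_val_inj).
Qed.

Variable S : {set 'I_p}.
Hypothesis card_gamma : #|S|%:R * gamma Sigma <= 2^-1.

Lemma norminf_invmx_cross_le (b : 'cV[R]_p) :
  norminf (invmx (subm Sigma S S) *m subm Sigma S (~: S) *m subv b (~: S))
    <= 2 * gamma Sigma * norm1 (subv b (~: S)).
Proof.
have invS := norminf_invmx_mulmx_le (gamma_ge0 _) (@subm_near1_gamma S) _ card_gamma.
rewrite -mulmxA (le_trans (invS _)) // -mulrA ler_wpM2l // norminf_le ?mulr_ge0 ?gamma_ge0 ?norm1_ge0 // => i.
by apply: normr_mulmx_entry_le; apply: subm_disjoint_le; rewrite -subsets_disjoint.
Qed.

Lemma norminf_schur_compl_le (b : 'cV[R]_p) t :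
  0 <= t -> (forall j, j \notin S -> `|b j 0| <= t) ->
  norminf (schur_compl Sigma S *m subv b (~: S))
    <= t + 2 * gamma Sigma * norm1 (subv b (~: S)).
Proof.
move=> t0 bt; set g := gamma Sigma; set N := norm1 (subv b (~: S)).
set x := invmx (subm Sigma S S) *m (subm Sigma S (~: S) *m subv b (~: S)).
have x_le : norminf x <= 2 * g * N by rewrite /x mulmxA norminf_invmx_cross_le.
have cross_le : norminf (subm Sigma (~: S) S *m x) <= g * N.
  have ScS : [disjoint ~: S & S] by rewrite disjoints_subset.
  apply: le_trans (norminf_mulmx_le (subm_disjoint_le Sigma ScS) x (gamma_ge0 _)) _.
  have := ler_wpM2r (norminf_ge0 x) card_gamma; lra.
have b_le i : `|subv b (~: S) i 0| <= t by rewrite mxE bt // -in_setC enum_valP.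
have -> : schur_compl Sigma S *m subv b (~: S) =
    subm Sigma (~: S) (~: S) *m subv b (~: S) - subm Sigma (~: S) S *m x.
  by rewrite /schur_compl /x mulmxBl -!mulmxA.
apply: le_trans (norminfB _ _) _.
have := norminf_mulmx_near1_le (gamma_ge0 _) (@subm_near1_gamma (~: S)) t0 b_le.
rewrite -/g -/N; lra.
Qed.

End CorrelationMatrix.

Unset Implicit Arguments. Set Strict Implicit.

Theorem lemma1 (R : realType) (p n kbar : nat) (Sigma : 'M[R]_p) (beta : 'cV[R]_p)
  (sigma nu omega0 eta : R) :
  posdef Sigma ->
  (forall j, Sigma j j = 1) ->
  0 < sigma -> 0 <= nu -> (1 <= n)%N ->
  let mu := mu_n R p n in
  let S := [set j : 'I_p | sigma * nu * mu < `|beta j 0|] in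
  let Sc := ~: S in
  let k := #|S| in
  (1 <= kbar)%N -> (k <= kbar)%N ->
  0 <= omega0 -> omega0 < 1 ->
  gamma Sigma <= omega0 / (2 * kbar%:R) ->
  0 <= eta ->
  norm1 (subv beta Sc) <= sigma * eta * mu ->
  let etabar := eta / kbar%:R in
  ((1 <= k)%N ->
     (forall T : {set 'I_p}, #|T| = k ->
        lambda_min_ge (subm Sigma T T) (1 - omega0 / 2) /\
        lambda_max_le (subm Sigma T T) (1 + omega0 / 2)) /\
     (forall T : {set 'I_p}, #|T| = k ->
        forall j, j \notin T ->
          norm1 (invmx (subm Sigma T T) *m subcol Sigma T j) <= omega0) /\
     norminf (invmx (subm Sigma S S) *m subm Sigma S Sc *m subv beta Sc)
       <= sigma * omega0 * etabar * mu /\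
     norminf ((subm Sigma Sc Sc
               - subm Sigma Sc S *m invmx (subm Sigma S S) *m subm Sigma S Sc)
              *m subv beta Sc)
       <= sigma * (nu + omega0 * etabar) * mu) /\
  (k = 0%N -> norminf (Sigma *m beta) <= sigma * (nu + omega0 * etabar) * mu).
Proof.
move=> _ diag1 sigma_gt0 nu_ge0 _ mu S Sc k kbar_ge1 k_le_kbar omega0_ge0 omega0_lt1
  gamma_le eta_ge0 tail_le etabar.
have g0 := gamma_ge0 Sigma; have near1 := subm_near1_gamma diag1.
have kbar_gt0 : 0 < kbar%:R :> R by rewrite ltr0n.
have card_gamma : k%:R * gamma Sigma <= omega0 / 2.
  have : k%:R * gamma Sigma <= kbar%:R * gamma Sigma by rewrite ler_wpM2r ?ler_nat.
  by move: gamma_le; rewrite ler_pdivlMr ?mulr_gt0 //; lra.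
have tail_gamma : 2 * gamma Sigma * norm1 (subv beta Sc) <= sigma * omega0 * etabar * mu.
  have := ler_wpM2r (norm1_ge0 (subv beta Sc)) gamma_le.
  have omega0_K : 0 <= omega0 / kbar%:R by rewrite divr_ge0 // ltW.
  have := ler_wpM2l omega0_K tail_le.
  rewrite /etabar invfM; lra.
have t_ge0 : 0 <= sigma * nu * mu by rewrite !mulr_ge0 ?sqrtr_ge0 // ltW.
have beta_small j : j \notin S -> `|beta j 0| <= sigma * nu * mu by rewrite inE -leNgt.
split=> [_|k0].
  have kg_half : k%:R * gamma Sigma <= 2^-1 by lra.
  split; [|split; [|split]].
  - move=> T cardT; split=> a /(eigenvalue_near1 g0 (near1 T));
      rewrite cardT ler_norml => /andP[]; lra.
  - move=> T cardT j jT; rewrite -cardT in card_gamma kg_half.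
    apply: le_trans (norm1_invmx_mulmx_le g0 (near1 T) _ kg_half) _.
    by have := norm1_subcol_le Sigma jT; lra.
  - exact: le_trans (norminf_invmx_cross_le diag1 kg_half beta) tail_gamma.
  - have := norminf_schur_compl_le diag1 kg_half t_ge0 beta_small; lra.
have S0 : S = set0 := cards0_eq k0.
have beta_tail : norm1 beta = norm1 (subv beta Sc).
  by rewrite norm1_subv; apply: eq_bigl => j; rewrite /Sc S0 setC0 inE.
have beta_le j : `|beta j 0| <= sigma * nu * mu by rewrite beta_small // S0 inE.
have := norminf_mulmx_near1_le g0 (near1_gamma diag1) t_ge0 beta_le.
rewrite beta_tail; have := mulr_ge0 g0 (norm1_ge0 (subv beta Sc)); lra.
Qed.
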